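(* Fix a node $v_i$. Suppose the current $0/1$ matrix $X=(x_{j,i})$ satisfies $x_{j,i}=0$ whenever $j\ne i$ and $w_{j,i}=0$, and satisfies the no-conflict constraint: for every competing pair $(v_a,v_b)\in E_c$ and every directed path $(v_{j_0},\dots,v_{j_p})$ in $\mathcal{G}_b$ with $j_0=b$, $j_p=a$, $p\ge1$, one has $\sum_{l=0}^{p-1}x_{j_l,j_{l+1}}\le p-1$. Suppose $C$ is the connectivity matrix of the data usage graph $\mathcal{G}_u$ defined by $X$. Then the procedure ILP-Solver below, run for $v_i$, terminates in time $\mathcal{O}(n^3)$ and outputs a matrix $X$ that is a feasible solution of the problem of maximizing $\sum_{j\neq i}w_{j,i}x_{j,i}$ over $\{x_{j,i}\}_{j\neq i}$: i.e., all entries of the output $X$ lie in $\{0,1\}$, $x_{j,i}=0$ whenever $w_{j,i}=0$, and the output $X$ satisfies the no-conflict constraint above.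
   Context: $\mathcal{V}=\{v_1,\dots,v_n\}$. Competing graph $\mathcal{G}_c=(\mathcal{V},E_c)$: undirected, with symmetric $0/1$ adjacency matrix $S=(s_{j,i})$, $s_{i,i}=0$. Benefit graph $\mathcal{G}_b$: directed, with nonnegative weights $W=(w_{j,i})$ and $(v_j,v_i)\in E_b$ iff $i\neq j$, $w_{j,i}>0$. Data usage graph $\mathcal{G}_u$: $(v_j,v_i)\in E_u$ iff $j\neq i$ and $x_{j,i}=1$. The connectivity matrix $C=(c_{j,i})$ of $\mathcal{G}_u$ has $c_{i,i}=1$ and, for $i\neq j$, $c_{j,i}=1$ iff there is a directed path from $v_j$ to $v_i$ in $\mathcal{G}_u$. ILP-Solver for $v_i$ (inputs $W,S,C,X$): let $\mathcal{B}_i=\{v_j\mid j\neq i, w_{j,i}>0, s_{j,i}=0\}$; sort $\mathcal{B}_i$ in non-increasing order of $w_{j,i}$. For each $v_j$ in this order, using the current $C$ compute $\mathcal{V}_j^-=\{v_k\mid c_{k,j}=1\}$, $\mathcal{S}_j^-=\{v_k\mid\exists v_p\in\mathcal{V}_j^-: s_{k,p}=1\}$, $\mathcal{S}_{i,j}^-=\{v_k\in\mathcal{S}_j^-\mid c_{i,k}=1\}$, $\mathcal{V}_i^+=\{v_k\mid c_{i,k}=1\}$, $\mathcal{S}_i^+=\{v_k\mid\exists v_p\in\mathcal{V}_i^+: s_{p,k}=1\}$, $\mathcal{S}_{i,j}^+=\{v_k\in\mathcal{S}_i^+\mid c_{k,j}=1\}$. If $\mathcal{S}_{i,j}^+=\emptyset$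 and $\mathcal{S}_{i,j}^-=\emptyset$, set $x_{j,i}\leftarrow1$, $c_{j,i}\leftarrow1$, and then for every pair $p\ne q$ in $\{1,\dots,n\}$ with $(p,q)\neq(j,i)$: if $c_{p,q}=0$, $c_{p,j}=1$ and $c_{i,q}=1$, set $c_{p,q}\leftarrow1$. Output the updated $X$ and $C$. *)

From mathcomp Require Import all_boot all_order all_algebra.
Set Implicit Arguments. Unset Strict Implicit. Unset Printing Implicit Defensive.
Import Order.TTheory GRing.Theory Num.Theory.

(* Nodes v_1..v_n are the ordinals 'I_n.  A 0/1 matrix is a boolean matrix;
   entry (M j i) is m_{j,i}. *)
Definition bmat (n : nat) := 'I_n -> 'I_n -> bool.

Definition upd n (M : bmat n) (j i : 'I_n) : bmat n :=
  fun p q => ((p == j) && (q == i)) || M p q.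

Definition bedge (R : realDomainType) n (W : 'I_n -> 'I_n -> R) : rel 'I_n :=
  fun j k => (j != k) && (0 < W j k)%R.

Definition uedge n (X : bmat n) : rel 'I_n := fun j k => (j != k) && X j k.

Definition conn_matrix n (X : bmat n) : bmat n :=
  fun j k => connect (uedge X) j k.

Definition support_ok (R : realDomainType) n (W : 'I_n -> 'I_n -> R) (X : bmat n) :=
  forall j k : 'I_n, j != k -> W j k = 0%R -> X j k = false.

(* No-conflict constraint: for every competing pair (v_a,v_b) in E_c and every
   directed path (v_{j_0},...,v_{j_p}) in G_b with j_0 = b, j_p = a, p >= 1,
   sum_{l<p} x_{j_l,j_{l+1}} <= p - 1.  The path is  b :: js  with p = size js. *)
Definition no_conflict (R : realDomainType) n (S : bmat n)
    (W : 'I_n -> 'I_n -> R) (X : bmat n) :=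
  forall (a b : 'I_n) (js : seq 'I_n),
    S a b -> js != [::] -> path (bedge W) b js -> last b js = a ->
    (\sum_(e <- zip (b :: js) js) (X e.1 e.2 : nat) <= (size js).-1)%N.

Definition Bset (R : realDomainType) n (W : 'I_n -> 'I_n -> R) (S : bmat n)
    (i : 'I_n) : seq 'I_n :=
  [seq j <- enum 'I_n | (j != i) && (0 < W j i)%R && ~~ S j i].

(* State of the procedure: current X, current C, and number of elementary
   steps performed so far (cost model). *)
Record state n := St { stX : bmat n; stC : bmat n; stcost : nat }.

(* the loop "for every pair p <> q with (p,q) <> (j,i): if c_{p,q} = 0,
   c_{p,j} = 1 and c_{i,q} = 1, set c_{p,q} <- 1", executed in place, pairs
   visited in lexicographic order. *)
Definition closure_update n (C : bmat n) (j i : 'I_n) : bmat n :=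
  foldl (fun (C : bmat n) (pq : 'I_n * 'I_n) =>
           let p := pq.1 in let q := pq.2 in
           if [&& p != q, (p, q) != (j, i), ~~ C p q, C p j & C i q]
           then upd C p q else C)
        C [seq (p, q) | p <- enum 'I_n, q <- enum 'I_n].

Definition ilp_step n (S : bmat n) (i : 'I_n) (st : state n) (j : 'I_n)
    : state n :=
  let X := stX st in
  let C := stC st in
  let Vjm := fun k => C k j in
  let Sjm := fun k => [exists p, Vjm p && S k p] in
  let Sijm := fun k => Sjm k && C i k in
  let Vip := fun k => C i k in
  let Sip := fun k => [exists p, Vip p && S p k] in
  let Sijp := fun k => Sip k && C k j in
  (* cost: n for V_j^-, n*n for S_j^-, n for S_{i,j}^-, n for V_i^+,
     n*n for S_i^+, n for S_{i,j}^+, 2n for the two emptiness tests *)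
  let cost := (stcost st + (n + n * n + n + n + n * n + n + n + n))%N in
  if [forall k, ~~ Sijp k] && [forall k, ~~ Sijm k] then
    St (upd X j i) (closure_update (upd C j i) j i) (cost + n * n)%N
  else St X C cost.

(* ILP-Solver for v_i with inputs S, C, X, processing B_i in the order [ord]
   (a non-increasing ordering of B_i by w_{.,i}, supplied by the caller;
   building B_i and sorting it is charged n + n*n steps). *)
Definition ilp_solver n (S : bmat n) (X C : bmat n) (i : 'I_n)
    (ord : seq 'I_n) : state n :=
  foldl (ilp_step S i) (St X C (n + n * n)%N) ord.

From mathcomp Require Import all_boot all_order all_algebra.
From mathcomp Require Import zify.
Import Order.TTheory GRing.Theory Num.Theory.
Set Implicit Arguments. Unset Strict Implicit.

(* Once support_ok holds, G_u is a subgraph of G_b, and a G_b path meets the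
   bound sum <= p - 1 exactly when it is not a G_u path; so the no-conflict
   constraint says that G_u has no path from b to a for a competing pair
   (a, b).  The solver keeps C an over-approximation of the connectivity of
   G_u.  Adding the edge (j, i) creates a new path b ~> a only as
   b ~> j -> i ~> a; then a is in V_i^+ and b is in S_{i,j}^+, so the test
   refuses the edge.  Each of the at most n iterations costs O(n^2). *)

Lemma sum_zip_le_size (T : Type) (r : rel T) (b : T) (p : seq T) :
  (\sum_(e <- zip (b :: p) p) (r e.1 e.2 : nat) <= size p)%N.
Proof.
elim: p b => [|c p IHp] b; first by rewrite big_nil.
by rewrite big_cons; apply: leq_add (leq_b1 _) (IHp c).
Qed.

Lemma sum_zip_lt_size (T : Type) (r : rel T) (b : T) (p : seq T) :
  (\sum_(e <- zip (b :: p) p) (r e.1 e.2 : nat) < size p)%N = ~~ path r b p.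
Proof.
elim: p b => [|c p IHp] b; first by rewrite big_nil.
rewrite big_cons /=; case: (r b c) => /=; first by rewrite add1n ltnS IHp.
by rewrite add0n ltnS sum_zip_le_size.
Qed.

Lemma connect_subU1 (T : finType) (e e' : rel T) (x0 y0 : T) :
  subrel e' [rel u v | e u v || (u == x0) && (v == y0)] ->
  forall x y, connect e' x y ->
  connect e x y || connect e x x0 && connect e y0 y.
Proof.
move=> sub_e' x y /connectP [p e'_p ->] {y}.
elim: p x e'_p => [|z p IHp] x /=; first by rewrite connect0.
case/andP => /sub_e' /orP [e_xz | /andP [/eqP -> /eqP ->]] /IHp /orP
  [ezy | /andP [ez0 e0y]].
- by rewrite (connect_trans (connect1 e_xz) ezy).
- by rewrite (connect_trans (connect1 e_xz) ez0) e0y orbT.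
- by rewrite connect0 ezy orbT.
- by rewrite connect0 e0y orbT.
Qed.

Section DataUsage.

Variable n : nat.
Implicit Types (X C S : bmat n) (i j a b p q : 'I_n).

Lemma connect_upd X j i x y :
  connect (uedge (upd X j i)) x y ->
  connect (uedge X) x y || connect (uedge X) x j && connect (uedge X) i y.
Proof.
apply: connect_subU1 => u v /andP [neq_uv].
by rewrite /= /upd /uedge neq_uv orbC.
Qed.

Lemma uedge_sub_bedge (R : realDomainType) (W : 'I_n -> 'I_n -> R) X :
  (forall j k, (0 <= W j k)%R) -> support_ok W X -> subrel (uedge X) (bedge W).
Proof.
move=> W_ge0 suppX u v /andP [neq_uv Xuv]; rewrite /bedge neq_uv lt_def W_ge0.
by rewrite andbT; apply: contraTneq Xuv => /(suppX u v neq_uv) ->.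
Qed.

Definition conflict_free S X :=
  forall a b, S a b -> ~~ connect (uedge X) b a.

Lemma conflict_free_no_conflict (R : realDomainType) S
    (W : 'I_n -> 'I_n -> R) X :
  conflict_free S X -> no_conflict S W X.
Proof.
move=> cfX a b js Sab js_ne0 bpath last_js.
rewrite -ltnS prednK ?lt0n ?size_eq0 // sum_zip_lt_size.
apply: contra (cfX a b Sab) => Xpath; apply/connectP; exists js => //.
have: path [rel u v | bedge W u v && X u v] b js by rewrite path_relI bpath.
by apply: sub_path => u v /andP [/andP [neq_uv _] Xuv]; rewrite /uedge neq_uv.
Qed.

Lemma no_conflict_conflict_free (R : realDomainType) S
    (W : 'I_n -> 'I_n -> R) X :
  (forall j, S j j = false) -> (forall j k, (0 <= W j k)%R) ->
  support_ok W X -> no_conflict S W X -> conflict_free S X.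
Proof.
move=> S_irr W_ge0 suppX ncX a b Sab.
apply/negP => /connectP [js upath last_js].
have js_ne0 : js != [::].
  by apply: contraTneq Sab => js0; rewrite last_js js0 S_irr.
have bpath := sub_path (uedge_sub_bedge W_ge0 suppX) upath.
have := ncX a b js Sab js_ne0 bpath (esym last_js).
rewrite -ltnS prednK ?lt0n ?size_eq0 // sum_zip_lt_size => /negP; apply.
by apply: sub_path upath => u v /andP [].
Qed.

Definition closure_step j i C (pq : 'I_n * 'I_n) : bmat n :=
  let p := pq.1 in let q := pq.2 in
  if [&& p != q, (p, q) != (j, i), ~~ C p q, C p j & C i q]
  then upd C p q else C.

Lemma closure_updateE C j i :
  closure_update C j i =
  foldl (closure_step j i) C [seq (p, q) | p <- enum 'I_n, q <- enum 'I_n].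
Proof. by []. Qed.

Lemma closure_step_mono j i C pq p q : C p q -> closure_step j i C pq p q.
Proof.
by rewrite /closure_step; case: ifP => // _ Cpq; rewrite /upd Cpq orbT.
Qed.

Lemma foldl_closure_step_mono j i C L p q :
  C p q -> foldl (closure_step j i) C L p q.
Proof. by elim: L C => [|pq L IHL] C //= Cpq; apply/IHL/closure_step_mono. Qed.

Lemma foldl_closure_step_trans j i C L p q :
  (p, q) \in L -> p != q -> (p, q) != (j, i) -> C p j -> C i q ->
  foldl (closure_step j i) C L p q.
Proof.
elim: L C => [|pq L IHL] C //=; rewrite in_cons => /orP [/eqP <- | pqL] neq_pq
  neq_ji Cpj Ciq; last first.
  by apply: IHL => //; apply: closure_step_mono.
apply: foldl_closure_step_mono; rewrite /closure_step /= neq_pq neq_ji Cpj Ciq.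
by case Cpq: (C p q) => //=; rewrite /upd !eqxx.
Qed.

Lemma closure_update_trans C j i p q :
  (forall k, C k k) -> C j i -> C p j -> C i q -> closure_update C j i p q.
Proof.
move=> C_refl Cji Cpj Ciq; rewrite closure_updateE.
have [<- | neq_pq] := eqVneq p q; first exact: foldl_closure_step_mono.
have [[-> ->] | neq_ji] := eqVneq (p, q) (j, i).
  exact: foldl_closure_step_mono.
apply: foldl_closure_step_trans => //.
by apply: allpairs_f; rewrite mem_enum.
Qed.

Lemma closure_update_connect X C j i :
  subrel (connect (uedge X)) C ->
  subrel (connect (uedge (upd X j i))) (closure_update (upd C j i) j i).
Proof.
move=> sub_C p q /connect_upd /orP
  [/sub_C Cpq | /andP [/sub_C Cpj /sub_C Ciq]].
  by rewrite closure_updateE foldl_closure_step_mono // /upd Cpq orbT.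
apply: closure_update_trans; rewrite /upd ?Cpj ?Ciq ?eqxx ?orbT //.
by move=> k; rewrite sub_C ?orbT ?connect0.
Qed.

Lemma conflict_free_upd S X C j i :
  conflict_free S X -> subrel (connect (uedge X)) C ->
  (forall a b, S a b -> C i a -> ~~ C b j) ->
  conflict_free S (upd X j i).
Proof.
move=> cfX sub_C test a b Sab; apply/negP => /connect_upd /orP [].
  by apply/negP; apply: cfX.
by case/andP => /sub_C Cbj /sub_C Cia; move: (test a b Sab Cia); rewrite Cbj.
Qed.

Lemma support_ok_upd (R : realDomainType) (W : 'I_n -> 'I_n -> R) X j i :
  support_ok W X -> (0 < W j i)%R -> support_ok W (upd X j i).
Proof.
move=> suppX Wji p q neq_pq Wpq; rewrite /upd suppX // orbF.
by apply/negP => /andP [/eqP pj /eqP qi]; rewrite -pj -qi Wpq ltxx in Wji.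
Qed.

Definition solver_inv (R : realDomainType) S (W : 'I_n -> 'I_n -> R)
    (st : state n) :=
  [/\ support_ok W (stX st), conflict_free S (stX st)
    & subrel (connect (uedge (stX st))) (stC st)].

Lemma ilp_step_inv (R : realDomainType) S (W : 'I_n -> 'I_n -> R) i st j :
  j != i -> (0 < W j i)%R ->
  solver_inv S W st -> solver_inv S W (ilp_step S i st j).
Proof.
case: st => X C c; rewrite /solver_inv /ilp_step /=.
move=> neq_ji Wji [suppX cfX sub_C].
case: ifP => // /andP [/forallP test _]; split => /=.
- exact: support_ok_upd.
- apply: conflict_free_upd cfX sub_C _ => a b Sab Cia.
  move: (test b) => /=; apply: contra => Cbj; rewrite Cbj andbT.
  by apply/existsP; exists a; rewrite Cia.
- exact: closure_update_connect.
Qed.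

Lemma foldl_ilp_step_inv (R : realDomainType) S (W : 'I_n -> 'I_n -> R) i st L :
  all (fun j => (j != i) && (0 < W j i)%R) L ->
  solver_inv S W st -> solver_inv S W (foldl (ilp_step S i) st L).
Proof.
elim: L st => //= j L IHL st /andP [/andP [neq_ji Wji] L_ok] inv.
exact: IHL L_ok (ilp_step_inv neq_ji Wji inv).
Qed.

Lemma ilp_step_cost S i st j :
  (stcost (ilp_step S i st j) <= stcost st + (6 * n + 3 * (n * n)))%N.
Proof. by rewrite /ilp_step; case: ifP => _ /=; lia. Qed.

Lemma foldl_ilp_step_cost S i st L :
  (stcost (foldl (ilp_step S i) st L)
     <= stcost st + size L * (6 * n + 3 * (n * n)))%N.
Proof.
elim: L st => [|j L IHL] st /=; first by rewrite addn0.
apply: leq_trans (IHL _) _; have := ilp_step_cost S i st j; lia.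
Qed.

Lemma size_Bset (R : realDomainType) (W : 'I_n -> 'I_n -> R) S i :
  (size (Bset W S i) <= n)%N.
Proof. by rewrite size_filter -[leqRHS](size_enum_ord n) count_size. Qed.

End DataUsage.

Lemma cost_bound_cubic n m :
  (m <= n)%N -> (n + n * n + m * (6 * n + 3 * (n * n)) <= 11 * n ^ 3)%N.
Proof.
move=> le_mn.
apply: leq_trans (_ : _ <= n + n * n + n * (6 * n + 3 * (n * n))) _.
  by rewrite leq_add2l leq_mul2r le_mn orbT.
by case: n {le_mn} => // k; rewrite !expnS expn0; nia.
Qed.

Theorem proposition2 :
  exists K : nat,
  forall (R : realDomainType) (n : nat) (S : bmat n)
         (W : 'I_n -> 'I_n -> R) (X C : bmat n) (i : 'I_n) (ord : seq 'I_n),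
    (forall j k, S j k = S k j) ->
    (forall j, S j j = false) ->
    (forall j k, (0 <= W j k)%R) ->
    support_ok W X ->
    no_conflict S W X ->
    (forall j k, C j k = conn_matrix X j k) ->
    perm_eq ord (Bset W S i) ->
    sorted (fun j k => (W k i <= W j i)%R) ord ->
    let out := ilp_solver S X C i ord in
    [/\ (stcost out <= K * n ^ 3)%N,
        support_ok W (stX out)
      & no_conflict S W (stX out)].
Proof.
(* Neither the symmetry of S nor the order in which B_i is processed matters. *)
exists 11 => R n S W X C i ord _ S_irr W_ge0 suppX ncX C_conn ord_B _ out.
have ord_ok : all (fun j => (j != i) && (0 < W j i)%R) ord.
  by apply/allP => j; rewrite (perm_mem ord_B) mem_filter => /andP [/andP []].
have init : solver_inv S W (St X C (n + n * n)).
  split => //=; first exact: no_conflict_conflict_free ncX.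
  by move=> p q; rewrite C_conn.
have [suppO cfO _] := foldl_ilp_step_inv ord_ok init.
split => //; last exact: conflict_free_no_conflict.
rewrite /out /ilp_solver; apply: leq_trans (foldl_ilp_step_cost _ _ _ _) _.
by apply: cost_bound_cubic; rewrite (perm_size ord_B) size_Bset.
Qed.
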